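(* Let $\mathcal{A}=\{H_1,\dots,H_n\}$ be an essential arrangement in $K^l$. Then $\mathcal{I}(\bar{\mathcal{A}})$ determines $L(\mathcal{A})$, and vice versa.
   Context: Let $K$ be a field and let $\mathcal{A}=\{H_1,\dots,H_n\}$ be an affine arrangement of $n$ distinct, linearly ordered hyperplanes in $K^l$. The lattice of intersections is $L(\mathcal{A})=\{\bigcap_{H\in\mathcal{B}}H \mid \mathcal{B}\subseteq\mathcal{A}\}$ (the empty intersection being $K^l$), partially ordered by reverse inclusion and ranked by codimension. $\mathcal{A}$ is called essential if $L(\mathcal{A})$ contains an element of rank $l$, i.e. some intersection of hyperplanes of $\mathcal{A}$ is a point. The coning $c\mathcal{A}=\{\tilde H_1,\dots,\tilde H_{n+1}\}$ is a central arrangement in $K^{l+1}$, where $\tilde H_{n+1}$ corresponds to the hyperplane at infinity $H_\infty$; $\bar{\mathcal{A}}=\{\bar H_1,\dots,\bar H_{n+1}\}$ denotes the projectivization of $c\mathcal{A}$ in $K\mathbb{P}^l$ (so $\bar H_{n+1}=\bar H_\infty$). With $[n+1]=\{1,\dots,n+1\}$ and $[n+1]^{l+1}_<=\{(i_1,\dots,i_{l+1})\in[n+1]^{l+1} \mid i_1<\cdots<i_{l+1}\}$, define $\mathcal{I}(\bar{\mathcal{A}})=\{(i_1,\dots,i_{l+1})\in[n+1]^{l+1}_< \mid \bar H_{i_1}\cap\cdots\cap\bar H_{i_{l+1}}\neq\emptyset\}$. *)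

From mathcomp Require Import all_boot all_order all_algebra.
Set Implicit Arguments. Unset Strict Implicit. Unset Printing Implicit Defensive.
Import GRing.Theory.
Local Open Scope ring_scope.

(* Affine hyperplanes in K^l are given by a pair (a, b), a a nonzero row
   vector; the hyperplane is { x in K^l | a . x = b }.  An ordered arrangement of n hyperplanes is a map
   A : 'I_n -> 'rV[K]_l * K (the order is the order of 'I_n). *)

Definition dotv (K : fieldType) (m : nat) (u v : 'rV[K]_m) : K :=
  \sum_(j < m) u 0 j * v 0 j.

Definition on_hyp (K : fieldType) (l : nat) (h : 'rV[K]_l * K) (x : 'rV[K]_l) : Prop :=
  dotv h.1 x = h.2.

Definition is_arrangement (K : fieldType) (l n : nat) (A : 'I_n -> 'rV[K]_l * K) : Prop :=
  (forall i, (A i).1 != 0) /\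
  (forall i j : 'I_n, i != j -> exists x, ~ (on_hyp (A i) x <-> on_hyp (A j) x)).

(* x lies in the intersection of the hyperplanes indexed by B
   (the empty intersection is K^l) *)
Definition inter (K : fieldType) (l n : nat) (A : 'I_n -> 'rV[K]_l * K)
  (B : {set 'I_n}) (x : 'rV[K]_l) : Prop :=
  forall i, i \in B -> on_hyp (A i) x.

(* The intersection poset L(A), recorded with its labelling by subsets of A:
   L_sub A B C  <->  (intersection over B) is contained in (intersection over C). *)
Definition L_sub (K : fieldType) (l n : nat) (A : 'I_n -> 'rV[K]_l * K)
  (B C : {set 'I_n}) : Prop :=
  forall x, inter A B x -> inter A C x.

Definition essential (K : fieldType) (l n : nat) (A : 'I_n -> 'rV[K]_l * K) : Prop :=
  exists (B : {set 'I_n}) (x : 'rV[K]_l),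
    inter A B x /\ forall y, inter A B y -> y = x.

(* Coning: the hyperplane a.x = b becomes the linear hyperplane with normal
   (a, -b) in K^(l+1); index n (= ord_max of 'I_(n+1)) is the hyperplane at
   infinity x_(l+1) = 0, with normal (0,...,0,1). *)
Definition cone_form (K : fieldType) (l n : nat) (A : 'I_n -> 'rV[K]_l * K)
  (k : 'I_n.+1) : 'rV[K]_l.+1 :=
  match unlift ord_max k with
  | Some i => \row_(j < l.+1) match unlift ord_max j with
                              | Some j' => (A i).1 0 j'
                              | None => - (A i).2
                              end
  | None => \row_(j < l.+1) (j == ord_max)%:R
  end.

(* t is in I(bar A): t is strictly increasing and the projective hyperplanes
   bar H_(t 0), ..., bar H_(t l) in KP^l have a common point, i.e. there is a
   nonzero vector of K^(l+1) on all the corresponding coned hyperplanes.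
   (Indices are 0-based: [n+1] is 'I_(n+1), the last one being infinity.) *)
Definition in_I (K : fieldType) (l n : nat) (A : 'I_n -> 'rV[K]_l * K)
  (t : {ffun 'I_l.+1 -> 'I_n.+1}) : Prop :=
  (forall i j : 'I_l.+1, (i < j)%N -> (t i < t j)%N) /\
  exists v : 'rV[K]_l.+1, v != 0 /\ forall k, dotv (cone_form A (t k)) v = 0.

(* Both I(bar A) and L(A) are determined by the linear matroid of the coning
   vectors c_i = (a_i, -b_i) and c_oo = (0, ..., 0, 1) in K^(l+1).  A tuple is in
   I(bar A) iff its l+1 coning vectors are dependent, so I(bar A) lists the
   non-bases; as A is essential the c_k span K^(l+1), so the bases determine the
   span of any subfamily.  And the intersection over B lies in the intersection
   over C iff it is empty (c_oo is in the span of the c_i, i in B) or every c_i,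
   i in C, is in that span.
   Conversely, l+1 coning vectors containing c_oo form a basis iff the other l
   hyperplanes meet in a single point, and l+1 vectors avoiding c_oo form a basis
   iff, for some j, the others meet in a single point off H_j.  Points are the
   minimal nonempty flats, and emptiness of a flat can be read off L(A) once we
   know whether A is central: A is not central iff L(A), with the empty set
   adjoined, has a strict chain with l+2 elements. *)

From mathcomp Require Import all_boot all_order all_algebra ring.
From Stdlib Require Import FunctionalExtensionality PropExtensionality.
Set Implicit Arguments. Unset Strict Implicit. Unset Printing Implicit Defensive.
Import GRing.Theory.
Local Open Scope ring_scope.

Section DotProduct.
Variables (F : fieldType) (m : nat).
Implicit Types (u x y : 'rV[F]_m) (a : F).

Lemma dotvDr u x y : dotv u (x + y) = dotv u x + dotv u y.
Proof. by rewrite /dotv -big_split; apply: eq_bigr => j _; rewrite !mxE mulrDr. Qed.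

Lemma dotvZr u a x : dotv u (a *: x) = a * dotv u x.
Proof. by rewrite /dotv mulr_sumr; apply: eq_bigr => j _; rewrite !mxE mulrCA. Qed.

Lemma dotvBr u x y : dotv u (x - y) = dotv u x - dotv u y.
Proof. by rewrite dotvDr -scaleN1r dotvZr mulN1r. Qed.

Lemma dotv_mulmx u x : (u *m x^T) 0 0 = dotv u x.
Proof. by rewrite !mxE; apply: eq_bigr => j _; rewrite !mxE. Qed.

End DotProduct.

Section Subfamily.
Variables (F : fieldType) (d m : nat) (v : 'I_m -> 'rV[F]_d).
Implicit Types (X Y J T : {set 'I_m}) (w : 'rV[F]_d).

Definition subfamily_mx X : 'M[F]_(m, d) := \matrix_(k < m) (if k \in X then v k else 0).

Definition indep X := \rank (subfamily_mx X) == #|X|.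

Definition is_basis X := (#|X| == d) && row_full (subfamily_mx X).

Definition perp X w := forall k, k \in X -> dotv (v k) w = 0.

Lemma subfamily_mx_mem X k : k \in X -> (v k <= subfamily_mx X)%MS.
Proof. by move=> kX; have := row_sub k (subfamily_mx X); rewrite rowK kX. Qed.

Lemma subfamily_mx_subP p (M : 'M_(p, d)) Y :
  (forall k, k \in Y -> (v k <= M)%MS) -> (subfamily_mx Y <= M)%MS.
Proof.
by move=> sYM; apply/row_subP => k; rewrite rowK; case: ifP => [/sYM|_]; rewrite ?sub0mx.
Qed.

Lemma subfamily_mxS X Y : X \subset Y -> (subfamily_mx X <= subfamily_mx Y)%MS.
Proof. by move=> /subsetP sXY; apply: subfamily_mx_subP => k /sXY /subfamily_mx_mem. Qed.

Lemma subfamily_mx0 : subfamily_mx set0 = 0.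
Proof. by apply/row_matrixP => k; rewrite rowK inE row0. Qed.

Lemma rank_subfamily_mxU1 X k :
  (\rank (subfamily_mx (k |: X)) <= (\rank (subfamily_mx X)).+1)%N.
Proof.
have sub : (subfamily_mx (k |: X) <= subfamily_mx X + v k)%MS.
  apply: subfamily_mx_subP => b; rewrite !inE => /orP[/eqP->|bX].
    exact: addsmxSr.
  exact: submx_trans (subfamily_mx_mem bX) (addsmxSl _ _).
apply: leq_trans (mxrankS sub) _.
apply: leq_trans (leq_of_leqif (mxrank_adds_leqif _ _)) _.
by rewrite rank_rV addnC; case: (_ != 0); rewrite ?add0n ?add1n.
Qed.

Lemma rank_subfamily_mx X : (\rank (subfamily_mx X) <= #|X|)%N.
Proof.
elim: {X}#|X| {-2}X (erefl #|X|) => [|c IH] X cX.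
  by move/eqP: cX; rewrite cards_eq0 => /eqP->; rewrite subfamily_mx0 mxrank0.
have [k kX] : {k | k \in X} by apply/sigW/set0Pn; rewrite -card_gt0 cX.
have cXk : #|X :\ k| = c by move: cX; rewrite (cardsD1 k) kX => -[].
rewrite cX -(setD1K kX); apply: leq_trans (rank_subfamily_mxU1 _ _) _.
by rewrite ltnS -cXk IH.
Qed.

Lemma perpU1 X k w : perp (k |: X) w <-> dotv (v k) w = 0 /\ perp X w.
Proof.
split=> [h|[hk hX] b]; first by split=> [|b bX]; apply: h; rewrite !inE ?eqxx ?bX ?orbT.
by rewrite !inE => /orP[/eqP->|/hX].
Qed.

Lemma perp_mulmx X w : perp X w <-> subfamily_mx X *m w^T = 0.
Proof.
have entry k : (subfamily_mx X *m w^T) k 0 = if k \in X then dotv (v k) w else 0.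
  have -> : (subfamily_mx X *m w^T) k 0 = (row k (subfamily_mx X *m w^T)) 0 0.
    by rewrite !mxE.
  rewrite row_mul rowK.
  by case: (k \in X); rewrite dotv_mulmx // /dotv big1 // => j _; rewrite mxE mul0r.
split=> [h|h k kX].
  by apply/matrixP => k j; rewrite (ord1 j) entry mxE; case: ifP => // /h.
by move: (entry k); rewrite h kX mxE.
Qed.

Lemma row_full_perp X w : row_full (subfamily_mx X) -> perp X w -> w = 0.
Proof.
rewrite /row_full -mxrank_tr => free /perp_mulmx Sw; apply: (row_free_inj free).
by rewrite mul0mx -[LHS]trmxK trmx_mul trmxK Sw trmx0.
Qed.

Lemma perp_witness X : ~~ row_full (subfamily_mx X) -> exists2 w, w != 0 & perp X w.
Proof.
rewrite /row_full -mxrank_tr -[_ == _]/(row_free _) -kermx_eq0.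
case/rowV0Pn => w /sub_kermxP wS nz_w; exists w => //; apply/perp_mulmx.
by rewrite -[LHS]trmxK trmx_mul trmxK wS trmx0.
Qed.

Lemma row_full_perpP X : reflect (forall w, perp X w -> w = 0) (row_full (subfamily_mx X)).
Proof.
apply: (iffP idP) => [full w|h]; first exact: row_full_perp.
by apply/negPn/negP => /perp_witness[w + /h w0]; rewrite w0 eqxx.
Qed.

Lemma perp_witness_notin X u :
  ~~ (u <= subfamily_mx X)%MS -> exists2 w, perp X w & dotv u w != 0.
Proof.
rewrite submxE; set C := cokermx _ => /rV0Pn[j nz_j]; exists (col j C)^T.
  by apply/perp_mulmx; rewrite trmxK colE mulmxA mulmx_coker mul0mx.
rewrite -dotv_mulmx trmxK (_ : (u *m col j C) 0 0 = (u *m C) 0 j) //.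
by rewrite !mxE; apply: eq_bigr => i _; rewrite !mxE.
Qed.

Lemma subfamily_mx_perpP X u :
  reflect (forall w, perp X w -> dotv u w = 0) (u <= subfamily_mx X)%MS.
Proof.
apply: (iffP idP) => [/submxP[D ->] w /perp_mulmx Sw|h].
  by rewrite -dotv_mulmx -mulmxA Sw mulmx0 mxE.
by apply/negPn/negP => /perp_witness_notin[w /h ->]; rewrite eqxx.
Qed.

Lemma perp_subset X Y w : X \subset Y -> perp Y w -> perp X w.
Proof. by move=> /subsetP sXY hY k /sXY /hY. Qed.

Lemma row_full_subfamily_mxS X Y :
  (subfamily_mx X <= subfamily_mx Y)%MS -> row_full (subfamily_mx X) -> row_full (subfamily_mx Y).
Proof. by rewrite -!sub1mx => sXY /submx_trans; apply. Qed.

Lemma indep0 : indep set0.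
Proof. by rewrite /indep subfamily_mx0 mxrank0 cards0. Qed.

Lemma indepU1 X k : indep X -> ~~ (v k <= subfamily_mx X)%MS -> indep (k |: X).
Proof.
move=> /eqP rX nkX.
have kX : k \notin X by apply: contra nkX; apply: subfamily_mx_mem.
rewrite /indep eqn_leq rank_subfamily_mx /= cardsU1 kX add1n -rX.
apply: rank_ltmx; rewrite ltmxE subfamily_mxS ?subsetUr //=.
by apply: contra nkX; apply: submx_trans; apply: subfamily_mx_mem; rewrite setU11.
Qed.

Lemma indep_extend J Y : indep J ->
  exists2 J' : {set 'I_m}, [/\ J \subset J', J' \subset J :|: Y & indep J']
            & forall b, b \in Y -> (v b <= subfamily_mx J')%MS.
Proof.
rewrite -(set_enum Y); elim: (enum Y) J => [|b s IH] J iJ.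
  by exists J; [rewrite subsetUl | move=> b; rewrite inE].
have [bJ|nbJ] := boolP (v b <= subfamily_mx J)%MS.
  have [J' [JJ' J'J iJ'] sJ'] := IH J iJ; exists J'.
    split=> //; apply: subset_trans J'J _; apply/subsetP => x.
    by rewrite !inE => /orP[|->]; rewrite ?orbT // => ->.
  move=> x; rewrite inE in_cons => /orP[/eqP->|xs]; last by apply: sJ'; rewrite inE.
  exact: submx_trans bJ (subfamily_mxS JJ').
have [J' [JJ' J'J iJ'] sJ'] := IH _ (indepU1 iJ nbJ); exists J'.
  split=> //; first exact: subset_trans (subsetUr _ _) JJ'.
  apply: subset_trans J'J _; apply/subsetP => x.
  by rewrite !inE => /orP[/orP[|]|] ->; rewrite ?orbT.
move=> x; rewrite inE in_cons => /orP[/eqP->|xs]; last by apply: sJ'; rewrite inE.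
by apply: subfamily_mx_mem; apply: (subsetP JJ'); rewrite setU11.
Qed.

Lemma basis_exchange_nonzero T k : is_basis T -> k \notin T -> v k != 0 ->
  exists2 t, t \in T & is_basis (k |: T :\ t).
Proof.
case/andP => /eqP cT fT kT nz_k.
have ik : indep [set k].
  rewrite -[[set k]]setU0; apply: indepU1 indep0 _.
  by rewrite subfamily_mx0; apply: contra nz_k => /submx0null ->.
have [J [kJ JkT /eqP iJ] TJ] := indep_extend T ik.
have fJ : row_full (subfamily_mx J) by apply: row_full_subfamily_mxS fT; apply: subfamily_mx_subP.
have cJ : #|J| = d by rewrite -iJ; apply/eqP.
have /subsetPn[t tT tJ] : ~~ (T \subset J).
  apply/negP => sTJ; have := subset_leq_card (_ : k |: T \subset J).
  by rewrite subUset kJ sTJ cardsU1 kT cT cJ ltnn => /(_ isT).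
exists t => //; rewrite /is_basis cardsU1 !inE (negbTE kT) andbF add1n.
rewrite (cardsD1 t T) tT add1n in cT; rewrite cT eqxx /=.
apply: row_full_subfamily_mxS fJ; apply: subfamily_mxS; apply/subsetP => x xJ.
have := subsetP JkT x xJ; rewrite !inE; case: eqP => [->|_] //=.
by move=> ->; rewrite andbT; apply: contraNneq tJ => <-.
Qed.

Lemma row_full_card X : row_full (subfamily_mx X) -> (d <= #|X|)%N.
Proof. by move=> /eqP <-; apply: rank_subfamily_mx. Qed.

Lemma basis_setD1_indep T k : is_basis T -> k \in T -> indep (T :\ k).
Proof.
case/andP => /eqP cT /eqP fT kT; rewrite /indep eqn_leq rank_subfamily_mx -ltnS.
rewrite (cardsD1 k T) kT add1n in cT; rewrite cT.
by have := rank_subfamily_mxU1 (T :\ k) k; rewrite setD1K // fT.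
Qed.

Lemma basis_setD1_not_full T k : is_basis T -> k \in T -> ~~ row_full (subfamily_mx (T :\ k)).
Proof.
case/andP => /eqP cT _ kT; apply/negP => /row_full_card.
by rewrite -cT (cardsD1 k T) kT add1n ltnn.
Qed.

Lemma basis_exchange_span X T k : is_basis T -> k \in T -> (v k <= subfamily_mx X)%MS ->
  exists2 b, b \in X & (b \notin T :\ k) && is_basis (b |: T :\ k).
Proof.
move=> bT kT kX; apply/exists_inP; apply: contraT => /exists_inPn noexch.
have XTk : (subfamily_mx X <= subfamily_mx (T :\ k))%MS.
  apply: subfamily_mx_subP => b bX; apply: contraT => nbTk.
  have bTk : b \notin T :\ k by apply: contra nbTk; apply: subfamily_mx_mem.
  have /eqP rb := indepU1 (basis_setD1_indep bT kT) nbTk.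
  case/andP: bT => /eqP cT _; rewrite (cardsD1 k T) kT add1n in cT.
  by move: (noexch b bX); rewrite bTk /is_basis /row_full rb cardsU1 bTk add1n cT eqxx.
case/negP: (basis_setD1_not_full bT kT); case/andP: bT => _.
apply: row_full_subfamily_mxS; apply: subfamily_mx_subP => b bT.
case: (eqVneq b k) => [->|bk]; first exact: submx_trans kX XTk.
by apply: subfamily_mx_mem; rewrite !inE bk.
Qed.

Lemma basis_complement_span X k :
  row_full (subfamily_mx setT) -> ~~ (v k <= subfamily_mx X)%MS ->
  exists2 T, is_basis T & (k \in T) && (subfamily_mx X <= subfamily_mx (T :\ k))%MS.
Proof.
move=> fullT nkX; have [J [_ JX iJ] XJ] := indep_extend X indep0; rewrite set0U in JX.
have nkJ : ~~ (v k <= subfamily_mx J)%MS.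
  by apply: contra nkX => /submx_trans; apply; apply: subfamily_mxS.
have kJ : k \notin J by apply: contra nkJ; apply: subfamily_mx_mem.
have [T [kJT _ /eqP iT] allT] := indep_extend setT (indepU1 iJ nkJ).
have fT : row_full (subfamily_mx T).
  by apply: row_full_subfamily_mxS fullT; apply: subfamily_mx_subP => b _; apply: allT.
exists T; first by rewrite /is_basis -iT (eqP fT) eqxx fT.
rewrite (subsetP kJT) ?setU11 //=; apply: subfamily_mx_subP => b bX.
apply: submx_trans (XJ b bX) (subfamily_mxS _); apply/subsetP => x xJ.
rewrite !inE (subsetP kJT) ?inE ?xJ ?orbT // andbT.
by apply: contraNneq kJ => <-.
Qed.

(* The span closure of a matroid in terms of its bases P: k is spanned by X
   unless some basis T through k has each b in X spanned by T :\ k. *)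
Definition basis_closure (P : pred {set 'I_m}) X k :=
  ~~ [exists T, [&& P T, k \in T & [forall b in X, (b \in T :\ k) || ~~ P (b |: T :\ k)]]].

Lemma subfamily_mx_basis_closure X k : row_full (subfamily_mx setT) ->
  (v k <= subfamily_mx X)%MS = basis_closure is_basis X k.
Proof.
move=> fullT; apply/idP/idP => [kX|].
  apply/existsP => -[T /and3P[bT kT /forall_inP XT]].
  have [b bX /andP[bTk bb]] := basis_exchange_span bT kT kX.
  by move: (XT b bX); rewrite (negbTE bTk) bb.
apply: contraR => /(basis_complement_span fullT)[T bT /andP[kT XTk]].
apply/existsP; exists T; rewrite bT kT; apply/forall_inP => b bX; apply/orP; right.
apply: contra (basis_setD1_not_full bT kT) => /andP[_]; apply: row_full_subfamily_mxS.
apply: subfamily_mx_subP => x; rewrite !inE => /orP[/eqP->|xTk].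
  exact: submx_trans (subfamily_mx_mem bX) XTk.
by apply: subfamily_mx_mem; rewrite !inE.
Qed.

End Subfamily.

Section IncreasingMaps.
Variables p q : nat.

Definition increasing (t : {ffun 'I_p -> 'I_q.+1}) :=
  forall i j : 'I_p, (i < j)%N -> (t i < t j)%N.

Lemma card_increasing t : increasing t -> #|[set t i | i : 'I_p]| = p.
Proof.
move=> inc; rewrite card_imset ?card_ord // => i j tij; apply: val_inj.
by case: (ltngtP i j) => // /inc; rewrite tij ltnn.
Qed.

Lemma increasing_of_card (T : {set 'I_q.+1}) : #|T| = p ->
  exists2 t, increasing t & [set t i | i : 'I_p] = T.
Proof.
move=> cT; pose s := enum T.
have size_s : size s = p by rewrite -cT cardE.
have lt_trans : transitive (fun a b : 'I_q.+1 => (a < b)%N).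
  by move=> b a c; apply: ltn_trans.
have sorted_s : sorted (fun a b : 'I_q.+1 => (a < b)%N) s.
  rewrite /s /enum_mem -enumT; apply: sorted_filter => //.
  by have := iota_ltn_sorted 0 q.+1; rewrite -val_enum_ord sorted_map.
exists [ffun i : 'I_p => nth ord0 s i].
  by move=> i j ij; rewrite !ffunE; apply: (sorted_ltn_nth lt_trans) => //; rewrite inE size_s.
apply/setP => x; apply/imsetP/idP => [[i _ ->]|xT].
  by rewrite ffunE -(mem_enum (mem T)) mem_nth // size_s.
have xs : x \in s by rewrite mem_enum.
have ip : (index x s < p)%N by rewrite -size_s index_mem.
by exists (Ordinal ip); rewrite // ffunE nth_index.
Qed.

End IncreasingMaps.

Section RelationalDescription.
Variables (n l : nat) (R : {set 'I_n} -> {set 'I_n} -> Prop).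

Definition strict_chain (f : nat -> {set 'I_n}) m :=
  forall i, (i < m)%N -> R (f i.+1) (f i) /\ ~ R (f i) (f i.+1).

Definition has_chain m := exists f, strict_chain f m.

(* For R := L_sub A with A essential: a chain of l+1 strict steps exists iff A
   is not central, and then R B setT means exactly that B has empty intersection. *)
Definition nonempty_rel B := has_chain l.+1 -> ~ R B setT.

Definition point_rel B := nonempty_rel B /\ forall C, nonempty_rel C -> R C B -> R B C.

Definition cone_basis_rel (T : {set 'I_n.+1}) :=
  if ord_max \in T then point_rel (lift ord_max @^-1: T)
  else exists2 j, j \in lift ord_max @^-1: T &
    point_rel (lift ord_max @^-1: T :\ j) /\ ~ R (lift ord_max @^-1: T :\ j) [set j].

Lemma strict_chain_ext f m B : strict_chain f m -> R B (f m) -> ~ R (f m) B ->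
  strict_chain (fun i => if i == m.+1 then B else f i) m.+1.
Proof.
move=> chain RBf nRfB i; rewrite ltnS leq_eqVlt => /orP[/eqP->|im].
  by rewrite eqxx ltn_eqF.
by rewrite (ltn_eqF (ltnW im : i < m.+1)%N) (ltn_eqF (im : i.+1 < m.+1)%N); apply: chain.
Qed.

End RelationalDescription.

Section HomogeneousCoordinates.
Variables (K : fieldType) (l : nat).
Implicit Types (x : 'rV[K]_l) (a : K).

Definition hvec x a : 'rV[K]_l.+1 :=
  \row_j match unlift ord_max j with Some j' => x 0 j' | None => a end.

Lemma hvec_surj (w : 'rV[K]_l.+1) : exists x a, w = hvec x a.
Proof.
exists (\row_j w 0 (lift ord_max j)), (w 0 ord_max); apply/rowP => j.
by rewrite !mxE; case: unliftP => [j' ->|->]; rewrite ?mxE.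
Qed.

Lemma hvec_eq0 x a : (hvec x a == 0) = (x == 0) && (a == 0).
Proof.
apply/eqP/andP => [/rowP h|[/eqP-> /eqP->]]; last first.
  by apply/rowP => j; rewrite !mxE; case: unlift => *; rewrite ?mxE.
split; last by move: (h ord_max); rewrite !mxE unlift_none => ->.
by apply/eqP/rowP => j; move: (h (lift ord_max j)); rewrite !mxE liftK.
Qed.

End HomogeneousCoordinates.

Section Cone.
Variables (K : fieldType) (l n : nat) (A : 'I_n -> 'rV[K]_l * K).
Implicit Types (B C : {set 'I_n}) (T : {set 'I_n.+1}) (x y p q : 'rV[K]_l).

Local Notation c := (cone_form A).
Local Notation S := (subfamily_mx (cone_form A)).
Local Notation perpc := (perp (cone_form A)).
Local Notation lft B := (lift ord_max @: B).

Definition is_point B := exists p, inter A B p /\ forall q, inter A B q -> q = p.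

Lemma card_lft B : #|lft B| = #|B|.
Proof. exact/card_imset/lift_inj. Qed.

Lemma ord_max_notin_lft B : ord_max \notin lft B.
Proof. by apply/imsetP => -[i _ /eqP]; rewrite (negbTE (neq_lift _ _)). Qed.

Lemma lft_preimset T : lft (lift ord_max @^-1: T) = T :\ ord_max.
Proof.
apply/setP => k; rewrite !inE; case: (unliftP ord_max k) => [i ->|->].
  by rewrite mem_imset ?inE 1?eq_sym ?(negbTE (neq_lift _ _)) //; apply: lift_inj.
by rewrite eqxx (negbTE (ord_max_notin_lft _)).
Qed.

Lemma lftD1 B j : lft (B :\ j) = lft B :\ lift ord_max j.
Proof.
apply/setP => k; rewrite !inE; case: (unliftP ord_max k) => [i ->|->].
  by rewrite !mem_imset ?inE ?(inj_eq (@lift_inj _ _)) //; apply: lift_inj.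
by rewrite !(negbTE (ord_max_notin_lft _)) andbF.
Qed.

Lemma dot_cone_max x a : dotv (c ord_max) (hvec x a) = a.
Proof.
rewrite /dotv (bigD1 ord_max) //= big1 ?addr0 => [|j /negbTE jn].
  by rewrite /cone_form unlift_none !mxE eqxx unlift_none mul1r.
by rewrite /cone_form unlift_none !mxE jn mul0r.
Qed.

Lemma dot_cone_lift i x a :
  dotv (c (lift ord_max i)) (hvec x a) = dotv (A i).1 x - (A i).2 * a.
Proof.
rewrite /dotv big_ord_recr /= /cone_form liftK !mxE unlift_none mulNr.
congr (_ - _); apply: eq_bigr => j _.
have -> : widen_ord (leqnSn l) j = lift ord_max j by apply: val_inj; rewrite /= [RHS]lift_max.
by rewrite !mxE liftK.
Qed.

Lemma perp_lft_hvec B x a :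
  perpc (lft B) (hvec x a) <-> forall i, i \in B -> dotv (A i).1 x = (A i).2 * a.
Proof.
split=> [h i iB|h _ /imsetP[i iB ->]]; last by rewrite dot_cone_lift h // subrr.
by apply/eqP; rewrite -subr_eq0 -dot_cone_lift h // imset_f.
Qed.

Lemma inter_perp B x : inter A B x <-> perpc (lft B) (hvec x 1).
Proof. by rewrite perp_lft_hvec; split=> h i /h; rewrite mulr1. Qed.

Lemma inter_of_perp B x a : a != 0 -> perpc (lft B) (hvec x a) -> inter A B (a^-1 *: x).
Proof.
by move=> nz_a /perp_lft_hvec h i /h xi; rewrite /on_hyp dotvZr xi mulrCA mulVf ?mulr1.
Qed.

Lemma in_I_basis t :
  in_I A t <-> increasing t /\ ~~ is_basis c [set t i | i : 'I_l.+1].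
Proof.
rewrite /is_basis; split=> [[inc [w [nz_w tw]]]|[inc]].
  split=> //; rewrite card_increasing // eqxx /=; apply: contra nz_w => full.
  by apply/eqP/(row_full_perp full) => _ /imsetP[i _ ->].
rewrite card_increasing // eqxx /= => /perp_witness[w nz_w tw].
by split=> //; exists w; split=> // i; apply: tw; apply: imset_f.
Qed.

Lemma nonempty_span B : (exists x, inter A B x) <-> ~~ (c ord_max <= S (lft B))%MS.
Proof.
split=> [[x /inter_perp xB]|/perp_witness_notin[w]].
  by apply/negP => /subfamily_mx_perpP/(_ _ xB); rewrite dot_cone_max => /eqP; rewrite oner_eq0.
have [x [a ->]] := hvec_surj w; rewrite dot_cone_max => wB nz_a.
by exists (a^-1 *: x); apply: inter_of_perp.
Qed.

Lemma L_sub_span B C : L_sub A B C <->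
  (c ord_max <= S (lft B))%MS \/ (forall i, i \in C -> (c (lift ord_max i) <= S (lft B))%MS).
Proof.
split=> [BC|[inf x xB|sub x /inter_perp xB]]; last 2 first.
- have : exists y, inter A B y by exists x.
  by move/nonempty_span; rewrite inf.
- apply/inter_perp => _ /imsetP[i iC ->].
  by move/subfamily_mx_perpP: (sub i iC); apply.
have [inf|/nonempty_span[x0 x0B]] := boolP (c ord_max <= S (lft B))%MS; [by left|right].
move=> i iC; apply/subfamily_mx_perpP => w; have [x [a ->]] := hvec_surj w.
move=> /perp_lft_hvec xB; rewrite dot_cone_lift; apply/eqP; rewrite subr_eq0; apply/eqP.
have yB : inter A B (x + (1 - a) *: x0).
  by move=> j jB; rewrite /on_hyp dotvDr dotvZr xB // (x0B j jB); ring.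
have := BC _ yB i iC; rewrite /on_hyp dotvDr dotvZr (BC _ x0B i iC) => e.
by apply: (addIr ((1 - a) * (A i).2)); rewrite e; ring.
Qed.

Lemma L_sub_nonempty B C x : inter A B x ->
  L_sub A B C <-> (S (lft C) <= S (lft B))%MS.
Proof.
move=> xB; have /nonempty_span ninf : exists x, inter A B x by exists x.
rewrite L_sub_span; split=> [[inf|sub]|sub]; first by rewrite inf in ninf.
  by apply: subfamily_mx_subP => _ /imsetP[i iC ->]; apply: sub.
by right=> i iC; apply: submx_trans sub; apply/subfamily_mx_mem/imset_f.
Qed.

Lemma L_sub_subset B C : C \subset B -> L_sub A B C.
Proof. by move=> /subsetP CB x xB i /CB; apply: xB. Qed.

Lemma inter_unique_row_full B p : inter A B p ->
  (forall q, inter A B q -> q = p) <-> row_full (S (ord_max |: lft B)).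
Proof.
move=> pB; split=> [uniq|full q qB].
  apply/row_full_perpP => w; have [x [a ->]] := hvec_surj w.
  case/perpU1; rewrite dot_cone_max => -> /perp_lft_hvec xB.
  have /uniq e : inter A B (p + x).
    by move=> i iB; rewrite /on_hyp dotvDr (pB i iB) xB // mulr0 addr0.
  have x0 : x = 0 by apply: (addrI p); rewrite e addr0.
  by apply/eqP; rewrite hvec_eq0 x0 !eqxx.
have : hvec (q - p) 0 = 0.
  apply: (row_full_perp full); apply/perpU1; rewrite dot_cone_max; split=> //.
  by apply/perp_lft_hvec => i iB; rewrite dotvBr (pB i iB) (qB i iB) subrr mulr0.
by move/eqP; rewrite hvec_eq0 subr_eq0 eqxx andbT => /eqP.
Qed.

Lemma inter_nonempty_small B : (#|B| <= l)%N ->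
  row_full (S (ord_max |: lft B)) -> exists x, inter A B x.
Proof.
move=> cB full; have : ~~ row_full (S (lft B)).
  by apply/negP => /row_full_card; rewrite card_lft ltnNge cB.
case/perp_witness => w + wB; have [x [a eq_w]] := hvec_surj w; rewrite {}eq_w in wB *.
have [a0|nz_a] := eqVneq a 0; last by exists (a^-1 *: x); apply: inter_of_perp.
rewrite a0 in wB * => /eqP[]; apply: (row_full_perp full); apply/perpU1.
by rewrite dot_cone_max.
Qed.

Lemma row_full_cone_max B : (#|B| <= l)%N ->
  row_full (S (ord_max |: lft B)) <-> is_point B.
Proof.
move=> cB; split=> [full|[p [pB uniq]]]; last exact/(inter_unique_row_full pB).
have [p pB] := inter_nonempty_small cB full.
by exists p; split=> //; apply/(inter_unique_row_full pB).
Qed.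

Lemma cone_max_neq0 : c ord_max != 0.
Proof. by apply/rV0Pn; exists ord_max; rewrite /cone_form unlift_none mxE eqxx oner_neq0. Qed.

Lemma row_full_cone_lft B : #|B| = l.+1 -> row_full (S (lft B)) <->
  exists2 j, j \in B & is_point (B :\ j) /\ ~ L_sub A (B :\ j) [set j].
Proof.
move=> cB; split=> [full|[j jB [[p [pB uniq]] npj]]].
  have basisB : is_basis c (lft B) by rewrite /is_basis card_lft cB eqxx full.
  have [_ /imsetP[j jB ->]] := basis_exchange_nonzero basisB (ord_max_notin_lft B) cone_max_neq0.
  rewrite -lftD1 => /andP[_ fullj].
  have cBj : #|B :\ j| = l by rewrite (cardsD1 j B) jB in cB; case: cB.
  have [p [pBj uniq]] : is_point (B :\ j) by apply/row_full_cone_max; rewrite ?cBj.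
  exists j => //; split; first by exists p.
  move=> /(_ p pBj j (set11 j)) pj.
  have pB : inter A B p.
    by move=> i iB; case: (eqVneq i j) => [->|ij] //; apply: pBj; rewrite !inE ij.
  by move/inter_perp: pB => /(row_full_perp full)/eqP; rewrite hvec_eq0 oner_eq0 andbF.
apply/row_full_perpP => w; have [x [a ->]] := hvec_surj w => wB.
have a0 : a = 0.
  apply/eqP/negPn/negP => nz_a; apply: npj => y yBj i; rewrite inE => /eqP ->.
  have xB := inter_of_perp nz_a wB.
  by rewrite (uniq y yBj) -(uniq _ (L_sub_subset (subsetDl _ _) xB)); apply: xB.
rewrite a0 in wB *; apply: (row_full_perp ((inter_unique_row_full pB).1 uniq)).
apply/perpU1; rewrite dot_cone_max; split=> //.
by apply: perp_subset wB; rewrite lftD1 subsetDl.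
Qed.

Lemma central_no_chain r : inter A setT r -> ~ has_chain (L_sub A) l.+1.
Proof.
move=> rT [f chain].
have rf B : inter A B r by move=> i _; apply: rT; rewrite inE.
have rank_f i : (i <= l.+1)%N -> (i <= \rank (S (lft (f i))))%N.
  elim: i => // i IH il; have [Rf nRf] := chain i il.
  move: Rf nRf; rewrite !(L_sub_nonempty _ (rf _)) => Rf nRf.
  apply: leq_ltn_trans (IH (ltnW il)) (rank_ltmx _).
  by rewrite ltmxE Rf; apply/negP.
have full : row_full (S (lft (f l.+1))) by rewrite /row_full eqn_leq rank_leq_col rank_f.
have /inter_perp/(row_full_perp full)/eqP := rf (f l.+1).
by rewrite hvec_eq0 oner_eq0 andbF.
Qed.

Lemma chain_below_point B0 x0 m : inter A B0 x0 -> (forall q, inter A B0 q -> q = x0) ->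
  (m <= l)%N -> exists f, [/\ strict_chain (L_sub A) f m, f m \subset B0 & (#|f m| <= m)%N].
Proof.
move=> x0B0 uniq; have rankB0 : (l <= \rank (S (lft B0)))%N.
  have /eqP full := (inter_unique_row_full x0B0).1 uniq.
  by have := rank_subfamily_mxU1 c (lft B0) ord_max; rewrite full ltnS.
elim: m => [_|m IH ml]; first by exists (fun=> set0); rewrite sub0set cards0.
have [f [chain_f fB0 cf]] := IH (ltnW ml).
have [b bB0 nb] : exists2 b, b \in B0 & ~~ (c (lift ord_max b) <= S (lft (f m)))%MS.
  have : ~~ (S (lft B0) <= S (lft (f m)))%MS.
    apply/negP => /mxrankS /(leq_trans rankB0) /leq_trans /(_ (rank_subfamily_mx _ _)).
    by rewrite card_lft leqNgt (leq_ltn_trans cf ml).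
  case/row_subPn => k; rewrite rowK; case: ifP => [/imsetP[b bB0 ->] nb|_].
    by exists b.
  by rewrite sub0mx.
exists (fun i => if i == m.+1 then b |: f m else f i); rewrite eqxx; split.
- apply: strict_chain_ext chain_f (L_sub_subset (subsetUr _ _)) _.
  rewrite (L_sub_nonempty _ (L_sub_subset fB0 x0B0)) => sub; case/negP: nb.
  by apply: submx_trans sub; apply/subfamily_mx_mem/imset_f; rewrite setU11.
- by rewrite subUset sub1set bB0 fB0.
- by rewrite cardsU1 (leq_add (leq_b1 _) cf).
Qed.

Hypothesis essA : essential A.

Lemma essential_direction x : x != 0 -> exists k, dotv (A k).1 x != 0.
Proof.
have [B0 [x0 [x0B0 uniq]]] := essA.
move=> nz_x; apply/existsP; apply: contraR nz_x => /existsPn x_perp.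
apply/eqP/(addrI x0); rewrite addr0; apply: uniq => i iB0.
by move: (x_perp i); rewrite negbK /on_hyp dotvDr x0B0 // => /eqP->; rewrite addr0.
Qed.

Lemma row_full_cone_setT : row_full (S setT).
Proof.
apply/row_full_perpP => w; have [x [a ->]] := hvec_surj w => wT.
have a0 : a = 0 by rewrite -(dot_cone_max x a); apply: wT; rewrite inE.
have x0 : x = 0.
  apply/eqP; apply: contraT => /essential_direction[k].
  have := (perp_lft_hvec setT x a).1 (perp_subset (subsetT _) wT) k (in_setT k).
  by rewrite a0 mulr0 => ->; rewrite eqxx.
by apply/eqP; rewrite hvec_eq0 x0 a0 !eqxx.
Qed.

Lemma L_sub_basis_closure B C : L_sub A B C <->
  basis_closure (is_basis c) (lft B) ord_max \/
  (forall i, i \in C -> basis_closure (is_basis c) (lft B) (lift ord_max i)).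
Proof.
have E k := subfamily_mx_basis_closure (lft B) k row_full_cone_setT.
rewrite L_sub_span; split=> -[h|h]; [left | right | left | right].
- by rewrite -E.
- by move=> i /h; rewrite E.
- by rewrite E.
- by move=> i /h; rewrite -E.
Qed.

Lemma noncentral_chain : ~ (exists r, inter A setT r) -> has_chain (L_sub A) l.+1.
Proof.
move=> noncentral; have [B0 [x0 [x0B0 uniq]]] := essA.
have [f [chain_f fB0 _]] := chain_below_point x0B0 uniq (leqnn l).
have /existsP[j /eqP x0j] : [exists j, dotv (A j).1 x0 != (A j).2].
  apply: contraT => /existsPn x0_all; case: noncentral; exists x0 => i _.
  by move: (x0_all i); rewrite negbK => /eqP.
exists (fun i => if i == l.+1 then j |: B0 else f i).
apply: strict_chain_ext chain_f (L_sub_subset (subset_trans fB0 (subsetUr _ _))) _.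
by move/(_ x0 (L_sub_subset fB0 x0B0) j (setU11 _ _)).
Qed.

Lemma nonempty_relE B : nonempty_rel l (L_sub A) B <-> exists x, inter A B x.
Proof.
have [inf|/nonempty_span[r rT]] := boolP (c ord_max <= S (lft setT))%MS; last first.
  split=> [_|_ /(central_no_chain rT) //].
  by exists r => i _; apply: rT; rewrite inE.
have noncentral : ~ exists r, inter A setT r by move/nonempty_span; rewrite inf.
split=> [/(_ (noncentral_chain noncentral)) nBT|[x xB] _ BT].
  by apply/nonempty_span/negP => infB; apply: nBT; apply/L_sub_span; left.
by apply: noncentral; exists x; apply: BT.
Qed.

Lemma point_relE B : point_rel l (L_sub A) B <-> is_point B.
Proof.
split=> [[/nonempty_relE[p pB] minB]|[p [pB uniq]]]; last first.
  split=> [|C /nonempty_relE[z zC] CB x xB]; first by apply/nonempty_relE; exists p.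
  by rewrite (uniq x xB) -(uniq z (CB z zC)).
exists p; split=> // q qB; apply/eqP/negPn/negP; rewrite -subr_eq0.
case/essential_direction => k nz_k.
pose y := p + ((A k).2 - dotv (A k).1 p) / dotv (A k).1 (q - p) *: (q - p).
have ykB : inter A (k |: B) y.
  move=> i; rewrite !inE => /orP[/eqP->|iB]; rewrite /on_hyp dotvDr dotvZr.
    by rewrite divfK // addrC subrK.
  by rewrite (dotvBr (A i).1) (pB i iB) (qB i iB) subrr mulr0 addr0.
have kB : L_sub A B (k |: B).
  by apply: minB (L_sub_subset (subsetUr _ _)); apply/nonempty_relE; exists y.
move: (kB _ pB k (setU11 _ _)) (kB _ qB k (setU11 _ _)) => pk qk.
by rewrite dotvBr qk pk subrr eqxx in nz_k.
Qed.

Lemma row_full_cone_basis T : #|T| = l.+1 ->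
  row_full (S T) <-> cone_basis_rel l (L_sub A) T.
Proof.
rewrite /cone_basis_rel; case: ifP => infT cT.
  have eT : T = ord_max |: lft (lift ord_max @^-1: T) by rewrite lft_preimset setD1K.
  rewrite eT cardsU1 ord_max_notin_lft card_lft add1n in cT; case: cT => cT.
  by rewrite {1}eT row_full_cone_max ?cT // point_relE.
have eT : T = lft (lift ord_max @^-1: T).
  rewrite lft_preimset; apply/setP => k; rewrite !inE andb_idl //.
  by apply: contraTneq => ->; rewrite infT.
rewrite eT card_lft in cT; rewrite {1}eT row_full_cone_lft //.
by split=> -[j jB [/point_relE pt nR]]; exists j => //; split=> //; apply/point_relE.
Qed.

Lemma is_basis_rel T : is_basis c T <-> #|T| = l.+1 /\ cone_basis_rel l (L_sub A) T.
Proof.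
rewrite /is_basis; split=> [/andP[/eqP cT /(row_full_cone_basis cT)]|[cT]] //.
by rewrite cT eqxx => /(row_full_cone_basis cT).
Qed.

End Cone.

Theorem theorem3p4 (K K' : fieldType) (l n : nat)
  (A : 'I_n -> 'rV[K]_l * K) (A' : 'I_n -> 'rV[K']_l * K') :
  is_arrangement A -> is_arrangement A' ->
  essential A -> essential A' ->
  ((forall t : {ffun 'I_l.+1 -> 'I_n.+1}, in_I A t <-> in_I A' t) <->
   (forall B C : {set 'I_n}, L_sub A B C <-> L_sub A' B C)).
Proof.
move=> _ _ essA essA'; split=> [sameI|sameL].
  have same_basis T : is_basis (cone_form A) T = is_basis (cone_form A') T.
    have [cT|ncT] := eqVneq #|T| l.+1; last by rewrite /is_basis (negbTE ncT).
    have [t inc <-] := increasing_of_card cT.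
    apply/idP/idP => basis; apply: contraT => nbasis.
      by move/in_I_basis: (conj inc nbasis) => /sameI/in_I_basis[_]; rewrite basis.
    by move/in_I_basis: (conj inc nbasis) => /sameI/in_I_basis[_]; rewrite basis.
  move=> B C; rewrite (L_sub_basis_closure essA) (L_sub_basis_closure essA').
  by rewrite (functional_extensionality _ _ same_basis).
have eL : L_sub A = L_sub A'.
  by do 2!apply: functional_extensionality => ?; apply: propositional_extensionality.
have same_basis T : is_basis (cone_form A) T = is_basis (cone_form A') T.
  apply/idP/idP => [/(is_basis_rel essA)|/(is_basis_rel essA')].
    by rewrite eL => /(is_basis_rel essA').
  by rewrite -eL => /(is_basis_rel essA).
by move=> t; rewrite !in_I_basis same_basis.
Qed.
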